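(* Let $k\ge4$ be an integer, $\eta\in[\eta_{k+1},\eta_k)$, and $j\ge k$ an integer. Then $\Theta_j(\eta)>0$, where $\Theta_j(\eta)=(1-|a|^4)\sin\eta+|a|^{j+1}\sin(j\eta)$.
   Context: For $\eta\in(0,\pi/3)$ let $|a|=\frac{1}{2\cos\eta}$. For integers $k\ge1$ let $\Phi_k(\eta)=(1-|a|^4)\sin((k-1)\eta)-|a|^3\sin((k-2)\eta)+|a|^k\sin\eta$. For each integer $k\ge4$, $\Phi_k$ has a unique zero in $(\pi/k,\pi/(k-1))$, denoted $\eta_k$. *)

From Stdlib Require Import Reals.
Open Scope R_scope.

Definition absa (eta : R) : R := / (2 * cos eta).

Definition Phi (k : nat) (eta : R) : R :=
  (1 - absa eta ^ 4) * sin ((INR k - 1) * eta)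
  - absa eta ^ 3 * sin ((INR k - 2) * eta)
  + absa eta ^ k * sin eta.

Definition Theta (j : nat) (eta : R) : R :=
  (1 - absa eta ^ 4) * sin eta + absa eta ^ (j + 1) * sin (INR j * eta).

(* Write a for |a|, so that Theta_j(eta) >= (1 - a^4) sin eta - a^(j+1).

   If eta <= pi/4 then a^2 <= 1/2, which forces n a^n <= 1 for n >= 5, while
   n = j+1 satisfies n eta > pi (as eta > pi/(k+1) >= pi/n), hence
   n sin eta > 2; so a^(j+1) < (1 - a^4) sin eta.

   If eta > pi/4, then k = 4, because eta < eta_k < pi/(k-1).  Up to a positive
   factor, Phi_4 = sin(eta) (4 cos^2 eta - 1) (8 cos^4 eta - 1), so eta_4 is the
   point where 8 cos^4 = 1, and eta < eta_4 gives cos^4 eta > 1/8, i.e.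
   a^4 < 1/2.  For j = 4, Theta_4 is an explicit positive function of cos eta;
   for j >= 5, a^(j+1) <= a^6 and a^12 < (1 - a^4)^2 / 2 <= ((1 - a^4) sin eta)^2. *)

From Stdlib Require Import Reals Lra Lia Psatz.
Open Scope R_scope.

Lemma PI_gt_3 : 3 < PI.
Proof. pose proof PI2_3_2; lra. Qed.

Lemma PI_div_le_compat (x y : R) : 0 < x -> x <= y -> PI / y <= PI / x.
Proof.
  intros hx hxy. unfold Rdiv.
  apply Rmult_le_compat_l; [pose proof PI_RGT_0; lra |].
  apply Rinv_le_contravar; lra.
Qed.

Lemma sin_ge_cubic (x : R) : 0 <= x <= PI -> x - x ^ 3 / 6 <= sin x.
Proof.
  intros [h0 hpi]. destruct (sin_bound x 0 h0 hpi) as [hlb _].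
  unfold sin_approx, sin_term in hlb. simpl in hlb. lra.
Qed.

Lemma cos_PI4_sqr : cos (PI / 4) ^ 2 = / 2.
Proof.
  rewrite cos_PI4. unfold Rdiv. rewrite Rmult_1_l, pow_inv, <- Rsqr_pow2.
  rewrite Rsqr_sqrt; lra.
Qed.

Lemma pow_le_1 (x : R) (n : nat) : 0 <= x <= 1 -> x ^ n <= 1.
Proof. intros hx. rewrite <- (pow1 n). apply pow_incr. exact hx. Qed.

(* Induction on n from 5: b <= 3/4 gives (n+1) b <= n for n >= 3. *)
Lemma INR_mul_pow_le_1 (n : nat) (b : R) :
  (5 <= n)%nat -> 0 <= b -> b ^ 2 <= / 2 -> INR n * b ^ n <= 1.
Proof.
  intros hn hb hb2.
  assert (hb34 : b <= 3 / 4) by nra.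
  induction hn as [|n hn IH].
  - assert (hb4 : b ^ 4 <= / 4).
    { replace (b ^ 4) with ((b ^ 2) ^ 2) by ring. nra. }
    replace (b ^ 5) with (b ^ 4 * b) by ring. simpl INR. nra.
  - apply (le_INR 5) in hn. simpl INR in hn.
    assert (0 <= b ^ n) by (apply pow_le; lra).
    rewrite S_INR. simpl pow. nra.
Qed.

Lemma absa_pos (eta : R) : 0 < cos eta -> 0 < absa eta.
Proof. intros hc. unfold absa. apply Rinv_0_lt_compat. lra. Qed.

Lemma absa_sqr (eta : R) : cos eta <> 0 -> absa eta ^ 2 * (4 * cos eta ^ 2) = 1.
Proof. intros hc. unfold absa. field. exact hc. Qed.

Lemma absa_pow4 (eta : R) : cos eta <> 0 -> absa eta ^ 4 * (16 * cos eta ^ 4) = 1.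
Proof. intros hc. unfold absa. field. exact hc. Qed.

Lemma Theta_ge (j : nat) (eta : R) :
  0 < cos eta -> (1 - absa eta ^ 4) * sin eta - absa eta ^ (j + 1) <= Theta j eta.
Proof.
  intros hc. unfold Theta.
  pose proof (SIN_bound (INR j * eta)) as [hsin _].
  assert (0 < absa eta ^ (j + 1)) by (apply pow_lt, absa_pos; exact hc).
  nra.
Qed.

Lemma Theta_pos_le_PI4 (j : nat) (eta : R) :
  (4 <= j)%nat -> PI / INR (j + 1) < eta <= PI / 4 -> Theta j eta > 0.
Proof.
  intros hj [hlo hhi].
  pose proof PI_gt_3. pose proof PI_4.
  set (n := (j + 1)%nat) in *.
  pose proof (le_INR 5 n ltac:(lia)) as hn. simpl INR in hn.
  assert (hn0 : 0 < PI / INR n) by (apply Rdiv_lt_0_compat; lra).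
  assert (hc : cos (PI / 4) <= cos eta) by (apply cos_decr_1; lra).
  assert (hc2 : / 2 <= cos eta ^ 2).
  { assert (0 <= cos (PI / 4)) by (apply cos_ge_0; lra).
    rewrite <- cos_PI4_sqr. apply pow_incr. lra. }
  assert (hcpos : 0 < cos eta) by (apply cos_gt_0; lra).
  pose proof (absa_pos eta hcpos) as hapos.
  pose proof (absa_sqr eta ltac:(lra)) as ha2.
  set (a := absa eta) in *.
  assert (ha2' : a ^ 2 <= / 2) by nra.
  assert (ha4 : a ^ 4 <= / 4) by (replace (a ^ 4) with ((a ^ 2) ^ 2) by ring; nra).
  pose proof (INR_mul_pow_le_1 n a ltac:(lia) ltac:(lra) ha2') as hna.
  assert (hsin : 5 / 6 * eta <= sin eta).
  { pose proof (sin_ge_cubic eta ltac:(lra)). nra. }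
  assert (hneta : PI < INR n * eta).
  { replace PI with (INR n * (PI / INR n)) at 1 by (field; lra). nra. }
  assert (hfirst : a ^ n < (1 - a ^ 4) * sin eta).
  { assert (hns : 5 / 2 < INR n * sin eta) by nra.
    apply Rmult_lt_reg_l with (INR n); [lra |].
    replace (INR n * ((1 - a ^ 4) * sin eta)) with ((1 - a ^ 4) * (INR n * sin eta)) by ring.
    nra. }
  pose proof (Theta_ge j eta hcpos) as hge. fold a n in hge. lra.
Qed.

Lemma Phi4_eq (x : R) : cos x <> 0 ->
  Phi 4 x = sin x * (2 * (4 * cos x ^ 2 - 1) * (8 * cos x ^ 4 - 1)) / (16 * cos x ^ 4).
Proof.
  intros hc. unfold Phi, absa.
  replace ((INR 4 - 1) * x) with (2 * x + x) by (simpl; lra).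
  replace (INR 4 - 2) with 2 by (simpl; lra).
  rewrite sin_plus, sin_2a, cos_2a_cos.
  field. exact hc.
Qed.

Lemma Theta4_eq (x : R) : cos x <> 0 ->
  Theta 4 x = sin x * (16 * cos x ^ 4 + 4 * cos x ^ 2 - 3) / (16 * cos x ^ 4).
Proof.
  intros hc. unfold Theta, absa.
  replace (INR 4 * x) with (2 * (2 * x)) by (simpl; lra).
  rewrite sin_2a, sin_2a, cos_2a_cos. simpl (4 + 1)%nat.
  field. exact hc.
Qed.

Lemma Phi4_root_cos (x : R) : 0 < x < PI / 3 -> Phi 4 x = 0 -> 8 * cos x ^ 4 = 1.
Proof.
  intros hx hphi. pose proof PI_gt_3.
  assert (hc : cos (PI / 3) < cos x) by (apply cos_decreasing_1; lra).
  rewrite cos_PI3 in hc.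
  assert (hs : 0 < sin x) by (apply sin_gt_0; lra).
  rewrite Phi4_eq in hphi by lra.
  assert (hden : 0 < 16 * cos x ^ 4) by (apply Rmult_lt_0_compat; [lra | apply pow_lt; lra]).
  assert (hnum : sin x * (2 * (4 * cos x ^ 2 - 1) * (8 * cos x ^ 4 - 1)) = 0).
  { apply (f_equal (fun t => t * (16 * cos x ^ 4))) in hphi.
    field_simplify in hphi; lra. }
  apply Rmult_integral in hnum as [hnum | hnum]; [lra |].
  apply Rmult_integral in hnum as [hnum | hnum]; [nra | lra].
Qed.

Lemma Theta4_pos (eta : R) : 0 < eta < PI / 2 -> / 8 < cos eta ^ 4 -> Theta 4 eta > 0.
Proof.
  intros heta hc4.
  assert (hc : 0 < cos eta) by (apply cos_gt_0; lra).
  assert (hs : 0 < sin eta) by (apply sin_gt_0; pose proof PI2_Rlt_PI; lra).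
  rewrite Theta4_eq by lra.
  assert (/ 3 < cos eta ^ 2) by nra.
  apply Rlt_gt, Rdiv_lt_0_compat; [apply Rmult_lt_0_compat |]; nra.
Qed.

Lemma Theta_pos_ge_PI4 (j : nat) (eta : R) :
  (5 <= j)%nat -> PI / 4 <= eta < PI / 2 -> / 8 < cos eta ^ 4 -> Theta j eta > 0.
Proof.
  intros hj heta hc4. pose proof PI_gt_3.
  assert (hc : 0 < cos eta) by (apply cos_gt_0; lra).
  assert (hcle : cos eta <= cos (PI / 4)) by (apply cos_decr_1; lra).
  assert (hs : 0 < sin eta) by (apply sin_gt_0; lra).
  assert (hs2 : / 2 <= sin eta ^ 2).
  { pose proof (sin2_cos2 eta) as hsc. unfold Rsqr in hsc.
    pose proof cos_PI4_sqr. nra. }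
  pose proof (absa_pos eta hc) as hapos.
  pose proof (absa_pow4 eta ltac:(lra)) as ha4.
  pose proof (Theta_ge j eta hc) as hge.
  set (a := absa eta) in *.
  set (u := a ^ 4) in *.
  assert (hu : 0 < u < / 2) by (split; [apply pow_lt | nra]; lra).
  assert (ha1 : a <= 1).
  { destruct (Rle_lt_dec a 1) as [| hgt]; [lra |].
    assert (1 < a ^ 2) by nra. unfold u in hu. nra. }
  assert (ha6 : a ^ (j + 1) <= a ^ 6).
  { replace (j + 1)%nat with (6 + (j - 5))%nat by lia. rewrite pow_add.
    assert (0 < a ^ 6) by (apply pow_lt; lra).
    pose proof (pow_le_1 a (j - 5) ltac:(lra)). nra. }
  assert (ha12 : a ^ 6 * a ^ 6 = u ^ 3) by (unfold u; ring).
  assert (hsq : a ^ 6 * a ^ 6 < ((1 - u) * sin eta) * ((1 - u) * sin eta)) by nra.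
  assert (a ^ 6 < (1 - u) * sin eta).
  { assert (0 < a ^ 6) by (apply pow_lt; lra).
    assert (0 < (1 - u) * sin eta) by nra. nra. }
  lra.
Qed.

Theorem lemma4p3 (k j : nat) (eta etak etak1 : R)
  (hk : (4 <= k)%nat)
  (hetak : PI / INR k < etak < PI / (INR k - 1))
  (hPhik : Phi k etak = 0)
  (hetak1 : PI / INR (k + 1) < etak1 < PI / INR k)
  (hPhik1 : Phi (k + 1) etak1 = 0)
  (heta : etak1 <= eta < etak)
  (hj : (k <= j)%nat) :
  Theta j eta > 0.
Proof.
  pose proof PI_gt_3.
  pose proof (le_INR 4 k hk) as hk4. simpl INR in hk4.
  assert (hk1 : INR (k + 1) = INR k + 1) by (rewrite plus_INR; reflexivity).
  assert (hpos : 0 < PI / INR (k + 1)) by (apply Rdiv_lt_0_compat; lra).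
  assert (hjk : PI / INR (j + 1) <= PI / INR (k + 1)).
  { apply PI_div_le_compat; [lra | apply le_INR; lia]. }
  assert (hk3 : PI / (INR k - 1) <= PI / 3) by (apply PI_div_le_compat; lra).
  destruct (Rle_lt_dec eta (PI / 4)) as [hle | hgt].
  - apply Theta_pos_le_PI4; [lia | lra].
  - assert (k = 4%nat) as ->.
    { destruct (Nat.eq_dec k 4) as [| hne]; [assumption |].
      pose proof (le_INR 5 k ltac:(lia)) as hk5. simpl INR in hk5.
      pose proof (PI_div_le_compat 4 (INR k - 1) ltac:(lra) ltac:(lra)). lra. }
    apply Phi4_root_cos in hPhik; [| lra].
    assert (hcos : cos etak < cos eta) by (apply cos_decreasing_1; lra).
    assert (0 < cos etak) by (apply cos_gt_0; lra).
    assert (hc4 : / 8 < cos eta ^ 4).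
    { assert (cos etak ^ 2 < cos eta ^ 2) by nra. nra. }
    destruct (Nat.eq_dec j 4) as [-> | hj4].
    + apply Theta4_pos; [lra | exact hc4].
    + apply Theta_pos_ge_PI4; [lia | lra | exact hc4].
Qed.
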